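(* Consider an ensemble of $m$ learners $l_1,\dots,l_m$ processing a data stream of $n$ data elements, where $e_i$ denotes an access to the data structures of learner $l_i$ and $e_1,\dots,e_m$ are distinct, so that the training phase accesses each $e_i$ exactly $n$ times. Mini-batching provides optimal access locality: taking a single mini-batch containing the whole stream yields the trace $e_1^n e_2^n\cdots e_m^n$ (each $e_i$ accessed $n$ consecutive times, learner after learner), whose total reuse distance is $m(m+n-1)=\mathcal{O}(m^2)$ for fixed mini-batch size, and no other ordering of these accesses has a smaller total reuse distance.
   Context: A trace is a finite sequence of references to data items. The reuse distance of an access in a trace is the number of distinct data items accessed since the previous access to the same item, including the reused item itself (so a finite reuse distance is at least $1$ and at most the number $m$ of distinct items). The reuse distance of the first access to an item is $\infty$; in computing totals, every such infinite value is replaced by $m$. The total reuse distance of a trace is the sum of the reuse distances of all its accesses (with this convention). *)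

From mathcomp Require Import all_boot.
Set Implicit Arguments. Unset Strict Implicit. Unset Printing Implicit Defensive.

Section ReuseDistance.
Variable T : eqType.

(* Reuse distance of an access to [x] made right after the prefix [p] of a
   trace.  [None] encodes infinity (first access).  Otherwise it is the number
   of distinct items accessed since the previous access to [x] (exclusive),
   up to and including the current access (so including [x] itself):
   the items after the last occurrence of [x] in [p] are
   [take (index x (rev p)) (rev p)]. *)
Definition reuse_distance (p : seq T) (x : T) : option nat :=
  if x \in p then
    let r := rev p in Some (size (undup (x :: take (index x r) r)))
  else None.

Fixpoint total_rd_aux (m : nat) (p s : seq T) : nat :=
  match s with
  | [::] => 0
  | x :: s' => odflt m (reuse_distance p x) + total_rd_aux m (rcons p x) s'
  end.

Definition total_reuse_distance (s : seq T) : nat :=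
  total_rd_aux (size (undup s)) [::] s.

Definition minibatch_trace (e : seq T) (n : nat) : seq T :=
  flatten [seq nseq n x | x <- e].

End ReuseDistance.

From mathcomp Require Import all_boot.
From mathcomp Require Import zify.
Set Implicit Arguments.
Unset Strict Implicit.
Unset Printing Implicit Defensive.

(* Every access has reuse distance at least 1, and each of the m first accesses
   costs m, so any trace of mn accesses to m distinct items has total reuse
   distance at least mn + m(m - 1) = m(m + n - 1).  In e_1^n ... e_m^n every
   access that is not a first access immediately follows an access to the same
   item, so it costs exactly 1 and the bound is attained. *)

Section ReuseDistanceBounds.
Variable T : eqType.
Implicit Types (e p q s : seq T) (x : T).

Lemma reuse_distance_gt0 p x d : reuse_distance p x = Some d -> 0 < d.
Proof.
rewrite /reuse_distance; case: (x \in p) => // -[<-].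
by case: ifP => // x_in; rewrite -has_predT has_undup has_predT; case: take x_in.
Qed.

Lemma reuse_distance_rcons q x : reuse_distance (rcons q x) x = Some 1.
Proof. by rewrite /reuse_distance mem_rcons mem_head rev_rcons /= eqxx. Qed.

Lemma total_rd_aux_cat m p s1 s2 :
  total_rd_aux m p (s1 ++ s2) = total_rd_aux m p s1 + total_rd_aux m (p ++ s1) s2.
Proof.
elim: s1 p => [|x s1 IH] p /=; first by rewrite cats0.
by rewrite IH cat_rcons addnA.
Qed.

Fixpoint fresh_accesses p s : nat :=
  if s is x :: s' then (x \notin p) + fresh_accesses (rcons p x) s' else 0.

Lemma size_undup_rcons p x :
  size (undup (rcons p x)) = (x \notin p) + size (undup p).
Proof.
have Ep : rcons p x =i x :: p by move=> y; rewrite mem_rcons.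
by rewrite (perm_size (perm_undup Ep)) /=; case: (x \in p).
Qed.

Lemma fresh_accessesE p s :
  fresh_accesses p s + size (undup p) = size (undup (p ++ s)).
Proof.
elim: s p => [|x s IH] p /=; first by rewrite cats0.
by rewrite -cat_rcons -IH size_undup_rcons addnCA addnA.
Qed.

Lemma total_rd_aux_ge m p s : 0 < m ->
  size s + m.-1 * fresh_accesses p s <= total_rd_aux m p s.
Proof.
move=> m_gt0; elim: s p => [|x s IH] p /=; first by rewrite muln0.
have := IH (rcons p x); rewrite mulnDr.
case: (boolP (x \in p)) => xp /=.
- have [d rd_x] : exists d, reuse_distance p x = Some d.
    by rewrite /reuse_distance xp; eexists.
  move/reuse_distance_gt0: (rd_x); rewrite rd_x /=; lia.
- by rewrite /reuse_distance (negbTE xp) /=; lia.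
Qed.

Lemma total_rd_aux_nseq m q x k : total_rd_aux m (rcons q x) (nseq k x) = k.
Proof.
elim: k q => [|k IH] q //=.
by rewrite reuse_distance_rcons IH.
Qed.

Lemma mem_minibatch_trace e n : 0 < n -> minibatch_trace e n =i e.
Proof.
move=> n_gt0 y; apply/flatten_mapP/idP.
  by case=> x xe; rewrite mem_nseq => /andP[_ /eqP ->].
by move=> ye; exists y => //; rewrite mem_nseq n_gt0 eqxx.
Qed.

Lemma size_minibatch_trace e n : size (minibatch_trace e n) = size e * n.
Proof.
elim: e => //= x e IH.
by rewrite /minibatch_trace /= size_cat size_nseq -/(minibatch_trace e n) IH mulSn.
Qed.

Lemma total_rd_aux_minibatch m p e n :
  0 < n -> uniq e -> {in e, forall x, x \notin p} ->
  total_rd_aux m p (minibatch_trace e n) = size e * (m + n.-1).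
Proof.
case: n => // n _; elim: e p => [|x e IH] p //= /andP[xNe e_uniq] eNp.
rewrite total_rd_aux_cat /= /reuse_distance (negbTE (eNp x (mem_head x e))).
rewrite total_rd_aux_nseq cat_rcons IH //=; first by rewrite mulSn addnA.
move=> y ye; rewrite mem_cat negb_or eNp ?inE ?ye ?orbT //=.
have yNx : y != x by apply: contraNneq xNe => <-.
by rewrite mem_nseq (negbTE yNx) andbF.
Qed.

End ReuseDistanceBounds.

Theorem theorem3 (T : eqType) (e : seq T) (n : nat) :
  uniq e -> 0 < n ->
  total_reuse_distance (minibatch_trace e n) = size e * (size e + n - 1)
  /\ (forall s : seq T, perm_eq s (minibatch_trace e n) ->
        total_reuse_distance (minibatch_trace e n) <= total_reuse_distance s).
Proof.
move=> e_uniq n_gt0.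
have distinct_mb : size (undup (minibatch_trace e n)) = size e.
  by rewrite (perm_size (perm_undup (mem_minibatch_trace e n_gt0))) undup_id.
have total_mb : total_reuse_distance (minibatch_trace e n)
                = size e * (size e + n - 1).
  rewrite /total_reuse_distance distinct_mb total_rd_aux_minibatch //=.
  by rewrite -subn1 addnBA.
split=> // s s_perm.
have distinct_s : size (undup s) = size e.
  by rewrite -distinct_mb; apply/perm_size/perm_undup/perm_mem.
have size_s : size s = size e * n.
  by rewrite (perm_size s_perm) size_minibatch_trace.
have fresh_s : fresh_accesses [::] s = size e.
  by rewrite -distinct_s -(fresh_accessesE [::]) addn0.
rewrite total_mb /total_reuse_distance distinct_s.
case: (posnP (size e)) => [-> //|e_gt0].
have := total_rd_aux_ge [::] s e_gt0.
rewrite size_s fresh_s; nia.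
Qed.
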